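(* Let $W_2\in\{M_2,S_2\}$ and let $\phi:W_2\to W_2$ be a linear map with $\sigma_{\mathcal{K}}(\phi(A))=\sigma_{\mathcal{K}}(A)$ for all $A\in W_2$. Then $\operatorname{tr}(\phi(A))=\operatorname{tr}(A)$ for all $A\in W_2$, and either $\operatorname{antitr}(\phi(A))=\operatorname{antitr}(A)$ for all $A\in W_2$, or $\operatorname{antitr}(\phi(A))=-\operatorname{antitr}(A)$ for all $A\in W_2$.
   Context: $M_2$: real $2\times2$ matrices; $S_2$: symmetric ones. For $A=\begin{bmatrix}a&b\\c&d\end{bmatrix}$, $\operatorname{tr}(A)=a+d$ and the anti-trace is $\operatorname{antitr}(A)=b+c$. Lorentz cone $\mathcal{K}=\{(x_1,x_2)^T:|x_1|\le x_2\}$; a real $\lambda$ is an L-eigenvalue of $A$ if there is a nonzero $x\in\mathcal{K}$ with $(A-\lambda I)x\in\mathcal{K}$ and $x^T(A-\lambda I)x=0$; $\sigma_{\mathcal{K}}(A)$ is the set of L-eigenvalues. *)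

From HB Require Import structures.
From mathcomp Require Import all_boot all_order all_algebra.
Set Implicit Arguments. Unset Strict Implicit. Unset Printing Implicit Defensive.
Import Order.TTheory GRing.Theory Num.Theory.
Local Open Scope ring_scope.

(* Indices 0 and 1 of 'I_2: entries x_1 = x 0 0, x_2 = x 1 0. *)
Definition i0 : 'I_2 := ord0.
Definition i1 : 'I_2 := ord_max.

Definition lorentz {R : realFieldType} (x : 'cV[R]_2) : Prop :=
  `|x i0 0| <= x i1 0.

Definition antitr {R : realFieldType} (A : 'M[R]_2) : R := A i0 i1 + A i1 i0.

Definition L_eigenvalue {R : realFieldType} (A : 'M[R]_2) (lam : R) : Prop :=
  exists x : 'cV[R]_2, [/\ x != 0, lorentz x, lorentz ((A - lam%:M) *m x)
                         & (x^T *m (A - lam%:M) *m x) 0 0 = 0].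

Definition L_spectrum {R : realFieldType} (A : 'M[R]_2) : R -> Prop :=
  fun lam => L_eigenvalue A lam.

(* W_2: all of M_2 (sym = false) or the symmetric matrices S_2 (sym = true) *)
Definition inW2 {R : realFieldType} (sym : bool) (A : 'M[R]_2) : Prop :=
  if sym then A^T = A else True.

From HB Require Import structures.
From mathcomp Require Import all_boot all_order all_algebra.
From mathcomp Require Import reals.
From mathcomp Require Import ring lra.
From Stdlib Require Import Classical.

Set Implicit Arguments.
Unset Strict Implicit.
Unset Printing Implicit Defensive.
Import Order.TTheory GRing.Theory Num.Theory.
Local Open Scope ring_scope.

(* An L-eigenvalue of a 2x2 matrix A is either an ordinary eigenvalue or comes with an
   eigenvector on one of the two boundary rays of the cone, spanned by (1,1) and (-1,1); on
   these rays the value is forced to be p(A) = (a+b+c+d)/2, resp. s(A) = (a-b-c+d)/2, and it is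
   attained exactly when a linear slack is nonnegative. As tr = p + s and antitr = p - s, it
   suffices to show that p o phi and s o phi are p and s in some order.
   Where the slack of phi A is nonnegative, p(phi A) is an L-eigenvalue of phi A, hence of A,
   so the polynomial function (p(phi A) - p(A)) (p(phi A) - s(A)) det(A - p(phi A)) vanishes on
   a half-space of W_2, hence on all of W_2. Polynomial functions on W_2 form an integral domain and the
   determinant factor cannot vanish identically, so p o phi is p or s; likewise s o phi.
   Finally p o phi = s o phi is impossible: [[0,1],[1,0]] and its opposite both have L-eigenvalues
   +1 and -1, which its image, having p = s = +-1, cannot all carry. *)

Lemma poly_eq0_on_ray (R : realFieldType) (p : {poly R}) (T : R) :
  (forall t, t <= T -> p.[t] = 0) -> p = 0.
Proof.
move=> p0; apply: (roots_geq_poly_eq0 (rs := [seq T - i%:R | i <- iota 0 (size p)])).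
- by apply/allP => _ /mapP [i _ ->]; apply/eqP/p0; rewrite lerBlDr lerDl ler0n.
- rewrite map_inj_uniq ?iota_uniq // => i j /eqP.
  by rewrite (inj_eq (subrI T)) eqr_nat => /eqP.
- by rewrite size_map size_iota.
Qed.

Section PolynomialAlongLines.
Variables (R : realFieldType) (V : lmodType R) (W : V -> Prop).
Hypothesis W_line : forall u v (t : R), W u -> W v -> W (u + t *: v).

Definition poly_along_lines (f : V -> R) :=
  forall u v, W u -> W v -> exists p : {poly R}, forall t, f (u + t *: v) = p.[t].

Lemma scalar_line {f : V -> R} : scalar f -> forall u v t, f (u + t *: v) = f u + t * f v.
Proof. by move=> f_lin u v t; rewrite addrC f_lin addrC. Qed.

Lemma scalar_poly_along_lines f : scalar f -> poly_along_lines f.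
Proof.
move=> f_lin u v _ _; exists ((f u)%:P + (f v)%:P * 'X) => t.
by rewrite (scalar_line f_lin) !hornerE mulrC.
Qed.

Lemma poly_along_linesB f g :
  poly_along_lines f -> poly_along_lines g -> poly_along_lines (f \- g).
Proof.
move=> f_poly g_poly u v Wu Wv.
have [[p fp] [q gq]] := (f_poly u v Wu Wv, g_poly u v Wu Wv).
by exists (p - q) => t; rewrite /= fp gq hornerD hornerN.
Qed.

Lemma poly_along_linesM f g :
  poly_along_lines f -> poly_along_lines g -> poly_along_lines (f \* g).
Proof.
move=> f_poly g_poly u v Wu Wv.
have [[p fp] [q gq]] := (f_poly u v Wu Wv, g_poly u v Wu Wv).
by exists (p * q) => t; rewrite /= fp gq hornerM.
Qed.

Lemma poly_along_lines_eq0 f G : poly_along_lines f -> scalar G ->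
  (forall u, W u -> 0 <= G u -> f u = 0) -> forall u, W u -> f u = 0.
Proof.
move=> f_poly G_lin f0 u Wu; have [|Gu_lt0] := lerP 0 (G u); first exact: f0.
have [p fp] := f_poly u u Wu Wu.
suff p0 : p = 0 by have := fp 0; rewrite scale0r addr0 p0 horner0.
apply: (@poly_eq0_on_ray _ p (-1)) => t t_le.
rewrite -fp f0 //; first exact: W_line.
(* G (u + t u) = (1 + t) G u >= 0 for t <= -1. *)
by rewrite [G _](scalar_line G_lin); nra.
Qed.

Lemma poly_along_lines_mul_eq0 f g : poly_along_lines f -> poly_along_lines g ->
  (forall u, W u -> f u * g u = 0) ->
  (forall u, W u -> f u = 0) \/ (forall u, W u -> g u = 0).
Proof.
move=> f_poly g_poly fg0.
case: (classic (forall u, W u -> f u = 0)) => [|f_neq0]; first by left.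
right=> v Wv; apply: NNPP => gv_neq0; apply: f_neq0 => u Wu; apply: NNPP => fu_neq0.
have Wvu : W (v - u) by rewrite -scaleN1r; apply: W_line.
have [[p fp] [q gq]] := (f_poly u _ Wu Wvu, g_poly u _ Wu Wvu).
have /eqP : p * q = 0.
  apply: (@poly_eq0_on_ray _ _ 0) => t _.
  by rewrite hornerM -fp -gq fg0 //; apply: W_line.
rewrite mulf_eq0 => /orP [/eqP p0 | /eqP q0].
- by apply: fu_neq0; have := fp 0; rewrite scale0r addr0 p0 horner0.
- by apply: gv_neq0; have := gq 1; rewrite scale1r addrC subrK q0 horner0.
Qed.

Lemma eq_poly_along_lines f g : f =1 g -> poly_along_lines f -> poly_along_lines g.
Proof.
by move=> fg f_poly u v Wu Wv; have [p fp] := f_poly u v Wu Wv; exists p => t; rewrite -fg.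
Qed.

End PolynomialAlongLines.

Section LorentzEigenvalues.
Context {R : realFieldType}.
Implicit Types (A B : 'M[R]_2) (x : 'cV[R]_2) (lam : R).

Lemma ord2P (i : 'I_2) : i = i0 \/ i = i1.
Proof. by case: i => [[|[|//]] ?]; [left | right]; apply/val_inj. Qed.

Lemma lift_ord0_i1 (j : 'I_1) : lift ord0 j = i1.
Proof. by apply: val_inj; case: j => [[]]. Qed.

Lemma lift_i1_i0 (j : 'I_1) : lift i1 j = i0.
Proof. by apply: val_inj; case: j => [[]]. Qed.

Lemma mulmx2E A x i : (A *m x) i 0 = A i i0 * x i0 0 + A i i1 * x i1 0.
Proof. by rewrite mxE !big_ord_recl big_ord0 addr0 lift_ord0_i1. Qed.

Lemma quad2E A x :
  (x^T *m A *m x) 0 0 = x i0 0 * (A *m x) i0 0 + x i1 0 * (A *m x) i1 0.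
Proof. by rewrite -mulmxA mxE !big_ord_recl big_ord0 addr0 !mxE lift_ord0_i1. Qed.

Lemma det2_shiftE A lam :
  \det (A - lam%:M) = (A i0 i0 - lam) * (A i1 i1 - lam) - A i0 i1 * A i1 i0.
Proof.
rewrite (expand_det_row _ ord0) !big_ord_recl big_ord0 /cofactor !det_mx11 !mxE /=.
by rewrite !lift_ord0_i1 lift_i1_i0 /=; ring.
Qed.

Lemma lorentz_eq0 x : lorentz x -> x i1 0 = 0 -> x = 0.
Proof.
move=> x_cone x1_0; apply/matrixP => i j; rewrite (ord1 j) mxE.
case: (ord2P i) => ->; last exact: x1_0.
by apply/eqP; rewrite -normr_le0 -x1_0.
Qed.

Lemma lorentz_orthogonal x y : lorentz x -> lorentz y ->
  x i0 0 * y i0 0 + x i1 0 * y i1 0 = 0 ->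
  [\/ x = 0, y = 0, x i0 0 = x i1 0 /\ y i0 0 = - y i1 0
     | x i0 0 = - x i1 0 /\ y i0 0 = y i1 0].
Proof.
move=> x_cone y_cone xy0.
have [x1_0|x1_neq0] := eqVneq (x i1 0) 0; first by apply: Or41; apply: lorentz_eq0.
have [y1_0|y1_neq0] := eqVneq (y i1 0) 0; first by apply: Or42; apply: lorentz_eq0.
move: x_cone y_cone xy0 x1_neq0 y1_neq0; rewrite /lorentz.
move: (x i0 0) (x i1 0) (y i0 0) (y i1 0) => x0 x1 y0 y1 x_cone y_cone xy0 x1_neq0 y1_neq0.
have x1_gt0 : 0 < x1 by rewrite lt_def x1_neq0 (le_trans _ x_cone).
have y1_gt0 : 0 < y1 by rewrite lt_def y1_neq0 (le_trans _ y_cone).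
case: (lerP 0 x0) => x0_sign; case: (lerP 0 y0) => y0_sign;
  rewrite ?(ger0_norm x0_sign) ?(ltr0_norm x0_sign) in x_cone;
  rewrite ?(ger0_norm y0_sign) ?(ltr0_norm y0_sign) in y_cone.
- by exfalso; nra.
- by apply: Or43; split; nra.
- by apply: Or44; split; nra.
- by exfalso; nra.
Qed.

(* For x = (1,1), x^T (A - lam) x = 0 forces lam = ray_eig_p A, and then
   (A - lam) x = ray_slack_p A * (-1,1), which is in the cone iff the slack is nonnegative.
   For x = (-1,1), likewise lam = ray_eig_m A and (A - lam) x = ray_slack_m A * (1,1). *)
Definition ray_eig_p A := (A i0 i0 + A i0 i1 + A i1 i0 + A i1 i1) / 2.
Definition ray_eig_m A := (A i0 i0 - A i0 i1 - A i1 i0 + A i1 i1) / 2.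
Definition ray_slack_p A := (A i1 i0 + A i1 i1 - A i0 i0 - A i0 i1) / 2.
Definition ray_slack_m A := (A i0 i1 - A i0 i0 + A i1 i1 - A i1 i0) / 2.

Lemma shift_mx2E A lam :
  [/\ (A - lam%:M) i0 i0 = A i0 i0 - lam, (A - lam%:M) i0 i1 = A i0 i1,
       (A - lam%:M) i1 i0 = A i1 i0 & (A - lam%:M) i1 i1 = A i1 i1 - lam].
Proof. by rewrite !mxE /= ?subr0. Qed.

Lemma L_eigenvalue_cases A lam : L_eigenvalue A lam ->
  [\/ lam = ray_eig_p A /\ 0 <= ray_slack_p A,
       lam = ray_eig_m A /\ 0 <= ray_slack_m A
     | \det (A - lam%:M) = 0].
Proof.
case=> x [x_neq0 x_cone y_cone]; rewrite quad2E.
set y := (A - lam%:M) *m x in y_cone * => xy0.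
have x1_gt0 : 0 < x i1 0.
  rewrite lt_def (le_trans _ x_cone) // andbT.
  by apply: contraNneq x_neq0 => /(lorentz_eq0 x_cone) ->.
case: (lorentz_orthogonal x_cone y_cone xy0) => [x0|y0|[ex ey]|[ex ey]].
- by rewrite x0 eqxx in x_neq0.
- apply: Or33; apply/eqP; rewrite -det_tr; apply/det0P.
  by exists x^T; rewrite ?trmx_eq0 // -trmx_mul -/y y0 trmx0.
- move: ey y_cone; rewrite /lorentz /y !mulmx2E.
  case: (shift_mx2E A lam) => -> -> -> ->; rewrite ex => ey y_cone.
  have {y_cone} := le_trans (normr_ge0 _) y_cone => y1_ge0.
  by apply: Or31; rewrite /ray_eig_p /ray_slack_p; split; nra.
- move: ey y_cone; rewrite /lorentz /y !mulmx2E.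
  case: (shift_mx2E A lam) => -> -> -> ->; rewrite ex => ey y_cone.
  have {y_cone} := le_trans (normr_ge0 _) y_cone => y1_ge0.
  by apply: Or32; rewrite /ray_eig_m /ray_slack_m; split; nra.
Qed.

Lemma L_eigenvalue_ray_p A : 0 <= ray_slack_p A -> L_eigenvalue A (ray_eig_p A).
Proof.
move=> slack_ge0; exists (const_mx 1); split.
- by apply/eqP => /matrixP /(_ i0 0) /eqP; rewrite !mxE oner_eq0.
- by rewrite /lorentz !mxE normr1.
- rewrite /lorentz !mulmx2E; case: (shift_mx2E A (ray_eig_p A)) => -> -> -> ->.
  rewrite !mxE !mulr1 ler_norml /ray_eig_p /ray_slack_p in slack_ge0 *.
  by apply/andP; split; lra.
- rewrite quad2E !mulmx2E; case: (shift_mx2E A (ray_eig_p A)) => -> -> -> ->.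
  by rewrite !mxE /ray_eig_p; lra.
Qed.

Lemma L_eigenvalue_ray_m A : 0 <= ray_slack_m A -> L_eigenvalue A (ray_eig_m A).
Proof.
move=> slack_ge0; exists (\col_i (if i == i0 then -1 else 1)); split.
- by apply/eqP => /matrixP /(_ i1 0) /eqP; rewrite !mxE oner_eq0.
- by rewrite /lorentz !mxE /= normrN normr1.
- rewrite /lorentz !mulmx2E; case: (shift_mx2E A (ray_eig_m A)) => -> -> -> ->.
  rewrite !mxE /= ler_norml /ray_eig_m /ray_slack_m in slack_ge0 *.
  by apply/andP; split; lra.
- rewrite quad2E !mulmx2E; case: (shift_mx2E A (ray_eig_m A)) => -> -> -> ->.
  by rewrite !mxE /= /ray_eig_m; lra.
Qed.

Lemma ray_eig_p_scalar : scalar ray_eig_p.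
Proof. by move=> a A B; rewrite /ray_eig_p !mxE; ring. Qed.

Lemma ray_eig_m_scalar : scalar ray_eig_m.
Proof. by move=> a A B; rewrite /ray_eig_m !mxE; ring. Qed.

Lemma ray_slack_p_scalar : scalar ray_slack_p.
Proof. by move=> a A B; rewrite /ray_slack_p !mxE; ring. Qed.

Lemma ray_slack_m_scalar : scalar ray_slack_m.
Proof. by move=> a A B; rewrite /ray_slack_m !mxE; ring. Qed.

Lemma mxtrace2E A : \tr A = ray_eig_p A + ray_eig_m A.
Proof.
by rewrite /mxtrace !big_ord_recl big_ord0 lift_ord0_i1 /ray_eig_p /ray_eig_m; lra.
Qed.

Lemma antitr2E A : antitr A = ray_eig_p A - ray_eig_m A.
Proof. by rewrite /antitr /ray_eig_p /ray_eig_m; lra. Qed.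

Definition mx2 (a b c d : R) : 'M[R]_2 :=
  \matrix_(i, j) if i == i0 then (if j == i0 then a else b) else (if j == i0 then c else d).

Lemma mx2_tr (a b d : R) : (mx2 a b b d)^T = mx2 a b b d.
Proof.
by apply/matrixP => i j; rewrite !mxE; case: (ord2P i) => ->; case: (ord2P j) => ->.
Qed.

Definition mx_sign := mx2 (-1) 0 0 1.
Definition mx_flip := mx2 0 1 1 0.

Lemma ray_eig_coincide_L_eigenvalues B c lam :
  ray_eig_p B = c -> ray_eig_m B = c -> lam != c ->
  L_eigenvalue B c -> L_eigenvalue B lam -> L_eigenvalue (- B) (- c) -> False.
Proof.
move=> Bp Bm lam_neq_c /L_eigenvalue_cases Bc /L_eigenvalue_cases Blam /L_eigenvalue_cases nBc.
move: Bp Bm lam_neq_c Bc Blam nBc.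
rewrite /ray_eig_p /ray_eig_m /ray_slack_p /ray_slack_m !det2_shiftE !mxE.
move: (B i0 i0) (B i0 i1) (B i1 i0) (B i1 i1) => a b b' d Bp Bm lam_neq_c Bc Blam nBc.
have eb' : b' = - b by lra.
have ed : d = 2 * c - a by lra.
subst b' d.
(* B - c = [[u, b], [-b, -u]] with u = a - c. The eigenvalue lam forces (u + b) (u - b) > 0,
   whereas c in the L-spectrum of B forbids u + b, u - b > 0 and -c in that of -B forbids
   u + b, u - b < 0. *)
have gap : (a - c) ^+ 2 - b ^+ 2 > 0.
  case: Blam => [[lam_p _]|[lam_m _]|det0]; [by case/eqP: lam_neq_c; lra..|].
  have : (c - lam) ^+ 2 > 0 by rewrite exprn_even_gt0 //= subr_eq0 eq_sym.
  by rewrite !expr2; nra.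
move: gap; rewrite !expr2 => gap.
have {}Bc : a - c + b <= 0 \/ a - c <= b.
  by case: Bc => [[_ ?]|[_ ?]|?]; [left; lra | right; lra | exfalso; nra].
have {}nBc : 0 <= a - c + b \/ b <= a - c.
  by case: nBc => [[_ ?]|[_ ?]|?]; [left; lra | right; lra | exfalso; nra].
case: Bc nBc => ? [] ?; [have eb : b = c - a by lra | | | have eb : b = a - c by lra];
  by rewrite ?eb in gap; nra.
Qed.

Lemma L_eigenvalue_flip lam : lam = 1 \/ lam = -1 ->
  L_eigenvalue mx_flip lam /\ L_eigenvalue (- mx_flip) lam.
Proof.
have ray_p A mu : mu = ray_eig_p A -> 0 <= ray_slack_p A -> L_eigenvalue A mu.
  by move=> ->; apply: L_eigenvalue_ray_p.
have ray_m A mu : mu = ray_eig_m A -> 0 <= ray_slack_m A -> L_eigenvalue A mu.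
  by move=> ->; apply: L_eigenvalue_ray_m.
case=> ->; split; [apply: ray_p | apply: ray_m | apply: ray_m | apply: ray_p];
  by rewrite /ray_eig_p /ray_eig_m /ray_slack_p /ray_slack_m !mxE /=; lra.
Qed.

End LorentzEigenvalues.

Section SpectrumPreservers.
Variables (R : realFieldType) (W : 'M[R]_2 -> Prop).
Hypothesis W_line : forall A B t, W A -> W B -> W (A + t *: B).
Hypothesis W_sign : W mx_sign.
Hypothesis W_flip : W mx_flip.
Implicit Types (F G : 'M[R]_2 -> R).

Lemma W_opp A : W A -> W (- A).
Proof.
move=> WA; have := W_line (-2) WA WA.
by rewrite scaleNr scaler_nat mulr2n opprD addrA subrr add0r.
Qed.

Lemma det_shift_poly_along_lines F :
  scalar F -> poly_along_lines W (fun A => \det (A - (F A)%:M)).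
Proof.
move=> F_lin.
have entry_lin (i j : 'I_2) : scalar (fun A : 'M[R]_2 => A i j).
  by move=> a A B; rewrite !mxE.
have diag_lin (i : 'I_2) : scalar (fun A : 'M[R]_2 => A i i - F A).
  by move=> a A B; rewrite !mxE F_lin; ring.
have : poly_along_lines W ((fun A : 'M[R]_2 => A i0 i0 - F A) \* (fun A => A i1 i1 - F A)
                           \- (fun A => A i0 i1) \* (fun A => A i1 i0)).
  by apply: poly_along_linesB; apply: poly_along_linesM; apply: scalar_poly_along_lines.
by apply: eq_poly_along_lines => A; rewrite det2_shiftE.
Qed.

Lemma det_shift_not_eq0 F : scalar F -> ~ (forall A, W A -> \det (A - (F A)%:M) = 0).
Proof.
move=> F_lin det0.
(* F takes the values +-1 at mx_sign and mx_flip, but mx_sign + mx_flip has eigenvalues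
   +-sqrt 2, which are no sums of two values +-1. *)
have := det0 _ (W_line 1 W_sign W_flip); have := det0 _ W_flip; have := det0 _ W_sign.
rewrite (scalar_line F_lin) !det2_shiftE !mxE /=.
move: (F mx_sign) (F mx_flip) => x y x2 y2 xy2.
have xy0 : x * y = 0 by nra.
by move/eqP: xy0; rewrite mulf_eq0 => /orP [] /eqP xy0; rewrite xy0 in x2 y2; lra.
Qed.

Lemma ray_eig_of_L_eigenvalue F G : scalar F -> scalar G ->
  (forall A, W A -> 0 <= G A -> L_eigenvalue A (F A)) ->
  (forall A, W A -> F A = ray_eig_p A) \/ (forall A, W A -> F A = ray_eig_m A).
Proof.
move=> F_lin G_lin F_eig.
pose det_F A := \det (A - (F A)%:M).
have F_ray_poly H : scalar H -> poly_along_lines W (F \- H).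
  by move=> H_lin; apply: poly_along_linesB; apply: scalar_poly_along_lines.
have Fp_poly := F_ray_poly _ ray_eig_p_scalar.
have Fm_poly := F_ray_poly _ ray_eig_m_scalar.
have det_F_poly : poly_along_lines W det_F := det_shift_poly_along_lines F_lin.
have prod0 : forall A, W A -> ((F \- ray_eig_p) \* (F \- ray_eig_m) \* det_F) A = 0.
  apply: (poly_along_lines_eq0 W_line _ G_lin).
    by apply: poly_along_linesM => //; apply: poly_along_linesM.
  move=> A WA GA_ge0 /=.
  by case: (L_eigenvalue_cases (F_eig A WA GA_ge0)) => [[-> _]|[-> _]|detA0];
    rewrite ?subrr ?(mul0r, mulr0) // /det_F detA0 mulr0.
have [Fpm0|det_F0] :=
  poly_along_lines_mul_eq0 W_line (poly_along_linesM Fp_poly Fm_poly) det_F_poly prod0.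
  have [] := poly_along_lines_mul_eq0 W_line Fp_poly Fm_poly Fpm0 => F0; [left|right] => A WA;
    by apply/eqP; rewrite -subr_eq0; apply/eqP/F0.
by case: (det_shift_not_eq0 F_lin det_F0).
Qed.

Variable phi : {linear 'M[R]_2 -> 'M[R]_2}.
Hypothesis phi_spec :
  forall A, W A -> forall lam, L_eigenvalue (phi A) lam <-> L_eigenvalue A lam.

Lemma ray_eig_p_preserved :
  (forall A, W A -> ray_eig_p (phi A) = ray_eig_p A) \/
  (forall A, W A -> ray_eig_p (phi A) = ray_eig_m A).
Proof.
apply: (@ray_eig_of_L_eigenvalue _ (ray_slack_p \o phi)).
- by move=> a A B /=; rewrite linearP ray_eig_p_scalar.
- by move=> a A B /=; rewrite linearP ray_slack_p_scalar.
- by move=> A WA slack_ge0; apply/phi_spec => //; apply: L_eigenvalue_ray_p.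
Qed.

Lemma ray_eig_m_preserved :
  (forall A, W A -> ray_eig_m (phi A) = ray_eig_p A) \/
  (forall A, W A -> ray_eig_m (phi A) = ray_eig_m A).
Proof.
apply: (@ray_eig_of_L_eigenvalue _ (ray_slack_m \o phi)).
- by move=> a A B /=; rewrite linearP ray_eig_m_scalar.
- by move=> a A B /=; rewrite linearP ray_slack_m_scalar.
- by move=> A WA slack_ge0; apply/phi_spec => //; apply: L_eigenvalue_ray_m.
Qed.

Lemma ray_eig_flip_image_neq : ray_eig_p (phi mx_flip) <> ray_eig_m (phi mx_flip).
Proof.
move=> p_eq_m; set c := ray_eig_p (phi mx_flip) in p_eq_m.
have c_pm1 : c = 1 \/ c = -1.
  rewrite /c; case: ray_eig_p_preserved => ->; rewrite // /ray_eig_p /ray_eig_m !mxE /=;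
    [left|right]; lra.
have opp_c_pm1 : - c = 1 \/ - c = -1 by case: c_pm1 => ->; [right|left]; rewrite ?opprK.
apply: (@ray_eig_coincide_L_eigenvalues _ (phi mx_flip) c (- c)) => //.
- by apply/eqP; case: c_pm1 => ->; lra.
- by apply/phi_spec => //; case: (L_eigenvalue_flip c_pm1).
- by apply/phi_spec => //; case: (L_eigenvalue_flip opp_c_pm1).
- rewrite -linearN; apply/phi_spec; first exact: W_opp.
  by case: (L_eigenvalue_flip opp_c_pm1).
Qed.

End SpectrumPreservers.

Theorem corollary4p4 (R : realType) (sym : bool)
  (phi : {linear 'M[R]_2 -> 'M[R]_2})
  (phi_W2 : forall A : 'M[R]_2, inW2 sym A -> inW2 sym (phi A))
  (phi_spec : forall A : 'M[R]_2, inW2 sym A -> forall lam : R, L_spectrum (phi A) lam <-> L_spectrum A lam) :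
  (forall A : 'M[R]_2, inW2 sym A -> \tr (phi A) = \tr A) /\
  ((forall A : 'M[R]_2, inW2 sym A -> antitr (phi A) = antitr A) \/
   (forall A : 'M[R]_2, inW2 sym A -> antitr (phi A) = - antitr A)).
Proof.
have W_line (A B : 'M[R]_2) (t : R) : inW2 sym A -> inW2 sym B -> inW2 sym (A + t *: B).
  by rewrite /inW2; case: (sym) => // hA hB; rewrite linearD linearZ /= hA hB.
have W_mx2 (a b d : R) : inW2 sym (mx2 a b b d).
  by rewrite /inW2; case: (sym) => //; apply: mx2_tr.
have W_sign : inW2 sym mx_sign := W_mx2 (-1) 0 1.
have W_flip : inW2 sym mx_flip := W_mx2 0 1 0.
have flip_neq := ray_eig_flip_image_neq W_line W_sign W_flip phi_spec.
have [pp|pm] := ray_eig_p_preserved W_line W_sign W_flip phi_spec;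
have [mp|mm] := ray_eig_m_preserved W_line W_sign W_flip phi_spec.
- by case: flip_neq; rewrite pp ?mp.
- split=> [A WA|]; first by rewrite !mxtrace2E pp ?mm.
  by left=> A WA; rewrite !antitr2E pp ?mm.
- split=> [A WA|]; first by rewrite !mxtrace2E pm ?mp // addrC.
  by right=> A WA; rewrite !antitr2E pm ?mp // opprB.
- by case: flip_neq; rewrite pm ?mm.
Qed.
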